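(* $\mathrm{Isom}_{\mathbb Z}(L)$ is equal to each of the groups $\langle (x\,y),-1\rangle\ltimes G$, $\langle (y\,z),-1\rangle\ltimes G$, $\langle (z\,x),-1\rangle\ltimes G$ (semidirect products with $G$ normal). In particular $\mathrm{Isom}_{\mathbb Z}(L)\cong(\mathbb Z_2\times\mathbb Z_2)\ltimes G$.
   Context: $\mathbb F$ is a field of characteristic zero, $\mathfrak{sl}_2$ the Lie algebra of $2\times2$ trace-zero matrices over $\mathbb F$ with trace form $(u,v)=\mathrm{tr}(uv)$. Equitable basis: $x=\begin{pmatrix}1&0\\0&-1\end{pmatrix}$, $y=\begin{pmatrix}-1&2\\0&1\end{pmatrix}$, $z=\begin{pmatrix}-1&0\\-2&1\end{pmatrix}$. Let $x^*=\begin{pmatrix}1&-1\\1&-1\end{pmatrix}$, $y^*=\begin{pmatrix}0&0\\1&0\end{pmatrix}$, $z^*=\begin{pmatrix}0&-1\\0&0\end{pmatrix}$; $G$ is the subgroup of $\mathrm{Aut}_{\mathbb F}(\mathfrak{sl}_2)$ generated by $\exp(\mathrm{ad}\,x^* ),\exp(\mathrm{ad}\,y^* ),\exp(\mathrm{ad}\,z^* )$. $L=\mathbb Zx\oplus\mathbb Zy\oplus\mathbb Zz$. An isometry is an $\mathbb F$-linear bijection of $\mathfrak{sl}_2$ preserving the trace form; $\mathrm{Isom}_{\mathbb Z}(L)$ is the group of isometries $\varphi$ with $\varphi(L)=L$. For distinct $u,v\in\{x,y,z\}$, $(u\,v)$ is the $\mathbb F$-linear map interchanging $u,v$ and fixing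 the third basis element; $-1$ is $u\mapsto -u$. *)

From HB Require Import structures.
From mathcomp Require Import all_boot all_order all_algebra.
Set Implicit Arguments. Unset Strict Implicit. Unset Printing Implicit Defensive.
Import Order.TTheory GRing.Theory.
Local Open Scope ring_scope.

Section Sl2.
Variable F : fieldType.

Definition mx2 (a b c d : F) : 'M[F]_2 :=
  \matrix_(i < 2, j < 2)
    if (i == 0 :> nat) then (if (j == 0 :> nat) then a else b)
    else (if (j == 0 :> nat) then c else d).

Definition ex : 'M[F]_2 := mx2 1 0 0 (-1).
Definition ey : 'M[F]_2 := mx2 (-1) 2 0 1.
Definition ez : 'M[F]_2 := mx2 (-1) 0 (-2) 1.
Definition xs : 'M[F]_2 := mx2 1 (-1) 1 (-1).
Definition ys : 'M[F]_2 := mx2 0 0 1 0.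
Definition zs : 'M[F]_2 := mx2 0 (-1) 0 0.

Definition i0 : 'I_3 := inord 0.
Definition i1 : 'I_3 := inord 1.
Definition i2 : 'I_3 := inord 2.

(* sl2 is identified with F^3 (row vectors) through the basis x, y, z:
   emb v = v_0 x + v_1 y + v_2 z. *)
Definition emb (v : 'rV[F]_3) : 'M[F]_2 :=
  v 0 i0 *: ex + v 0 i1 *: ey + v 0 i2 *: ez.

(* coordinates of a trace-zero matrix [[a,b],[c,-a]] in the basis x, y, z
   (inverse of emb on sl2; uses char F <> 2) *)
Definition coord (m : 'M[F]_2) : 'rV[F]_3 :=
  let a := m 0 0 in let b := m 0 1 in let c := m 1 0 in
  \row_(j < 3) (if j == i0 then a + b / 2 - c / 2
                else if j == i1 then b / 2 else - (c / 2)).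

Definition ad (a u : 'M[F]_2) : 'M[F]_2 := a *m u - u *m a.

(* For a nilpotent, ad a is a
   nilpotent operator on a 4-dim space, so (ad a)^4 = 0 and the series is
   exactly the finite sum below. *)
Definition exp_ad (a u : 'M[F]_2) : 'M[F]_2 :=
  \sum_(k < 4) (k`!%:R)^-1 *: iter k (ad a) u.

(* A linear map of sl2 is represented by its 3x3 matrix A in the basis x,y,z,
   acting on coordinate rows: v |-> v *m A; composition is matrix product. *)
Definition exp_ad_mx (a : 'M[F]_2) : 'M[F]_3 :=
  lin1_mx (fun v => coord (exp_ad a (emb v))).

Definition tform (u v : 'rV[F]_3) : F := \tr (emb u *m emb v).

Definition inL (v : 'rV[F]_3) : Prop := forall j, exists n : int, v 0 j = n%:~R.

Definition IsomZ (A : 'M[F]_3) : Prop :=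
  [/\ A \in unitmx,
      (forall u v, tform (u *m A) (v *m A) = tform u v),
      (forall v, inL v -> inL (v *m A)) &
      (forall w, inL w -> exists2 v, inL v & v *m A = w)].

Inductive gen (S : 'M[F]_3 -> Prop) : 'M[F]_3 -> Prop :=
  | gen1 : gen S 1%:M
  | genM s g : S s -> gen S g -> gen S (s *m g)
  | genV s g : S s -> gen S g -> gen S (invmx s *m g).

Definition Ggrp : 'M[F]_3 -> Prop :=
  gen (fun s => s = exp_ad_mx xs \/ s = exp_ad_mx ys \/ s = exp_ad_mx zs).

Definition swap (i j : 'I_3) : 'M[F]_3 := tperm_mx i j.
Definition minus1 : 'M[F]_3 := - 1%:M.

Definition Hgrp (i j : 'I_3) : 'M[F]_3 -> Prop :=
  gen (fun s => s = swap i j \/ s = minus1).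

Definition semidirect_eq (K H N : 'M[F]_3 -> Prop) : Prop :=
  [/\ (forall a, K a <-> exists h n, [/\ H h, N n & a = h *m n]),
      (forall a, H a -> K a),
      (forall a, N a -> K a),
      (forall k n, K k -> N n -> N (invmx k *m n *m k)) &
      (forall a, H a -> N a -> a = 1%:M)].

Definition klein_four (H : 'M[F]_3 -> Prop) : Prop :=
  exists a b : 'M[F]_3,
    [/\ (forall c, H c <-> [\/ c = 1%:M, c = a, c = b | c = a *m b]),
        a *m a = 1%:M, b *m b = 1%:M, a *m b = b *m a &
        uniq [:: 1%:M; a; b; a *m b]].

End Sl2.

(* Linear maps of sl2 are 3x3 matrices acting on coordinate rows in the basis
   x, y, z, and the trace form has Gram matrix Q = 4 I - 2 J.  Everything is
   transported to integer matrices (a record [zmx] of nine integers, so that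
   concrete identities are decided by computation):
   - Isom_Z(L) is the image of the integer m with m Q m^T = Q, and exp ad x*,
     exp ad y*, exp ad z* are integer matrices gX, gY, gZ ([IsomZ_zisom],
     [IsomZ_of_zisom], [exp_ad_xs]); their group G_Z preserves Q, has
     determinant 1 and keeps vectors of negative norm in the cone of positive
     first coordinate ([inG_pos]).
   - Descent: G_Z moves every such vector of norm -6 to w = x + y + z
     ([zw_descent]); isometries fixing w are permutation matrices, the even ones
     lie in G_Z, so every integral isometry is h g with h in {1, (u v), -1, -(u v)}
     and g in G_Z ([zdecomp]).  Conjugation by (u v) permutes the generators,
     and the determinant and positivity rule out h in G_Z for h <> 1. *)

From Pilot Require Import Defs.
From HB Require Import structures.
From mathcomp Require Import all_boot all_order all_algebra perm.
From mathcomp Require Import zify ring.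
Set Implicit Arguments. Unset Strict Implicit. Unset Printing Implicit Defensive.
Import Order.TTheory GRing.Theory Num.Theory.
Local Open Scope ring_scope.

Record zmx := ZM { z00 : int; z01 : int; z02 : int;
                   z10 : int; z11 : int; z12 : int;
                   z20 : int; z21 : int; z22 : int }.
Record zvec := ZV { zc0 : int; zc1 : int; zc2 : int }.

Definition zmul (a b : zmx) : zmx :=
  ZM (z00 a * z00 b + z01 a * z10 b + z02 a * z20 b)
     (z00 a * z01 b + z01 a * z11 b + z02 a * z21 b)
     (z00 a * z02 b + z01 a * z12 b + z02 a * z22 b)
     (z10 a * z00 b + z11 a * z10 b + z12 a * z20 b)
     (z10 a * z01 b + z11 a * z11 b + z12 a * z21 b)
     (z10 a * z02 b + z11 a * z12 b + z12 a * z22 b)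
     (z20 a * z00 b + z21 a * z10 b + z22 a * z20 b)
     (z20 a * z01 b + z21 a * z11 b + z22 a * z21 b)
     (z20 a * z02 b + z21 a * z12 b + z22 a * z22 b).

Definition zact (v : zvec) (a : zmx) : zvec :=
  ZV (zc0 v * z00 a + zc1 v * z10 a + zc2 v * z20 a)
     (zc0 v * z01 a + zc1 v * z11 a + zc2 v * z21 a)
     (zc0 v * z02 a + zc1 v * z12 a + zc2 v * z22 a).

Definition ztr (a : zmx) : zmx :=
  ZM (z00 a) (z10 a) (z20 a) (z01 a) (z11 a) (z21 a) (z02 a) (z12 a) (z22 a).

Definition zdet (a : zmx) : int :=
  z00 a * (z11 a * z22 a - z12 a * z21 a) - z01 a * (z10 a * z22 a - z12 a * z20 a)
  + z02 a * (z10 a * z21 a - z11 a * z20 a).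

Definition z1 : zmx := ZM 1 0 0 0 1 0 0 0 1.
Definition zneg1 : zmx := ZM (-1) 0 0 0 (-1) 0 0 0 (-1).

(* Gram matrix of the trace form in the basis x, y, z *)
Definition zgram : zmx := ZM 2 (-2) (-2) (-2) 2 (-2) (-2) (-2) 2.

Definition zform (v : zvec) (M : zmx) : int :=
  zc0 v * (z00 M * zc0 v + z01 M * zc1 v + z02 M * zc2 v)
  + zc1 v * (z10 M * zc0 v + z11 M * zc1 v + z12 M * zc2 v)
  + zc2 v * (z20 M * zc0 v + z21 M * zc1 v + z22 M * zc2 v).

Definition zq (v : zvec) : int :=
  2 * (zc0 v ^+ 2 + zc1 v ^+ 2 + zc2 v ^+ 2)
  - 4 * (zc0 v * zc1 v + zc1 v * zc2 v + zc2 v * zc0 v).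

Ltac zmx_ring :=
  repeat match goal with a : zmx |- _ => case: a => * | v : zvec |- _ => case: v => * end;
  rewrite /zmul /zact /ztr /zdet /zform /zq /z1 /zneg1 /=; try congr ZM; try congr ZV; ring.

Lemma zmulA a b c : zmul a (zmul b c) = zmul (zmul a b) c. Proof. zmx_ring. Qed.
Lemma zmul1m a : zmul z1 a = a. Proof. zmx_ring. Qed.
Lemma zmulm1 a : zmul a z1 = a. Proof. zmx_ring. Qed.
Lemma zactM v a b : zact v (zmul a b) = zact (zact v a) b. Proof. zmx_ring. Qed.
Lemma zact1 v : zact v z1 = v. Proof. zmx_ring. Qed.
Lemma ztrM a b : ztr (zmul a b) = zmul (ztr b) (ztr a). Proof. zmx_ring. Qed.
Lemma zdetM a b : zdet (zmul a b) = zdet a * zdet b. Proof. zmx_ring. Qed.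

Lemma zneg1_central a : zmul zneg1 a = zmul a zneg1. Proof. zmx_ring. Qed.
Lemma zneg1_invol : zmul zneg1 zneg1 = z1. Proof. by []. Qed.

Lemma zneg1_conj a g : zmul (zmul zneg1 a) (zmul g (zmul zneg1 a)) = zmul a (zmul g a).
Proof. zmx_ring. Qed.

Lemma zconj_mul a s g : zmul a a = z1 ->
  zmul a (zmul (zmul s g) a) = zmul (zmul a (zmul s a)) (zmul a (zmul g a)).
Proof. by move=> Ha; rewrite !zmulA -(zmulA _ a a) Ha zmulm1. Qed.

Definition zisom (m : zmx) : Prop := zmul (zmul m zgram) (ztr m) = zgram.

Lemma zq_gram v : zq v = zform v zgram. Proof. zmx_ring. Qed.

Lemma zform_act v m M : zform (zact v m) M = zform v (zmul (zmul m M) (ztr m)).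
Proof. zmx_ring. Qed.

Lemma zq_isom v m : zisom m -> zq (zact v m) = zq v.
Proof. by move=> Hm; rewrite !zq_gram zform_act Hm. Qed.

Lemma zisomM a b : zisom a -> zisom b -> zisom (zmul a b).
Proof.
rewrite /zisom => Ha Hb.
by rewrite ztrM !zmulA -(zmulA a b) -(zmulA a (zmul b zgram)) Hb.
Qed.

Lemma zneg1_isom : zisom zneg1. Proof. by []. Qed.

(* The matrices of exp ad x*, exp ad y*, exp ad z* and of their inverses. *)
Definition gX : zmx := ZM 1 2 0 0 2 1 0 (-1) 0.
Definition gY : zmx := ZM 0 0 (-1) 0 1 2 1 0 2.
Definition gZ : zmx := ZM 2 1 0 (-1) 0 0 2 0 1.
Definition gXi : zmx := ZM 1 0 2 0 0 (-1) 0 1 2.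
Definition gYi : zmx := ZM 2 0 1 2 1 0 (-1) 0 0.
Definition gZi : zmx := ZM 0 (-1) 0 1 2 0 0 2 1.

Definition zgen (s : zmx) : Prop :=
  s = gX \/ s = gY \/ s = gZ \/ s = gXi \/ s = gYi \/ s = gZi.

Inductive inG : zmx -> Prop :=
  | inG1 : inG z1
  | inGM s g : zgen s -> inG g -> inG (zmul s g).

Lemma inG_gen s : zgen s -> inG s.
Proof. by move=> Hs; rewrite -(zmulm1 s); apply: inGM => //; apply: inG1. Qed.

Lemma inG_mul a b : inG a -> inG b -> inG (zmul a b).
Proof.
elim=> [|s g Hs _ IH] Hb; first by rewrite zmul1m.
by rewrite -zmulA; apply: inGM => //; apply: IH.
Qed.

Lemma zgen_inv s : zgen s -> exists2 s', zgen s' & zmul s s' = z1.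
Proof.
rewrite /zgen; case=> [->|[->|[->|[->|[->|->]]]]];
  [exists gXi|exists gYi|exists gZi|exists gX|exists gY|exists gZ]; by rewrite /zgen; auto 6.
Qed.

Lemma inG_inv g : inG g -> exists2 g', inG g' & zmul g g' = z1.
Proof.
elim=> [|s g0 Hs _ [g' Hg' E]]; first by exists z1; [apply: inG1|].
have [s' Hs' Es] := zgen_inv Hs.
exists (zmul g' s'); first by apply: inG_mul => //; apply: inG_gen.
by rewrite -zmulA (zmulA g0) E zmul1m.
Qed.

Lemma inG_isom g : inG g -> zisom g.
Proof.
elim=> [|s g0 Hs _ IH]; first by [].
by apply: zisomM => //; case: Hs => [->|[->|[->|[->|[->|->]]]]].
Qed.

Lemma inG_det g : inG g -> zdet g = 1.
Proof.
elim=> [|s g0 Hs _ IH]; first by [].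
by rewrite zdetM IH; case: Hs => [->|[->|[->|[->|[->|->]]]]].
Qed.

Lemma zq_gen v s : zgen s -> zq (zact v s) = zq v.
Proof. by move=> Hs; apply: zq_isom; apply: inG_isom; apply: inG_gen. Qed.

(* Vectors of negative norm have coordinates of one sign, since
   q(s,t,u) = 2 (s + t - u)^2 - 8 st and q is symmetric. *)
Lemma zq_pair_pos s t u : zq (ZV s t u) < 0 -> 0 < s * t.
Proof.
rewrite (_ : zq _ = 2 * (s + t - u) ^+ 2 - 8 * (s * t)); last by rewrite /zq /=; ring.
by move: ((s + t - u) ^+ 2) (sqr_ge0 (s + t - u)) => X HX; lia.
Qed.

Lemma zq_neg_same_sign v : zq v < 0 ->
  [/\ 0 < zc0 v * zc1 v, 0 < zc1 v * zc2 v & 0 < zc2 v * zc0 v].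
Proof.
case: v => a b c Hq; split; [apply: (zq_pair_pos (u := c)) | apply: (zq_pair_pos (u := a))
  | apply: (zq_pair_pos (u := b))]; by move: Hq; rewrite /zq /=; congr (_ < _); ring.
Qed.

Lemma zq_neg_pos v : zq v < 0 -> 0 < zc0 v -> 0 < zc1 v /\ 0 < zc2 v.
Proof.
move=> /zq_neg_same_sign[A _ C] Ha.
by case: v Ha A C => a b c /= Ha A C; split; nia.
Qed.

Lemma zgen_pos v s : zgen s -> zq v < 0 -> 0 < zc0 v -> 0 < zc0 (zact v s).
Proof.
move=> Hs Hq Ha; have [Hb Hc] := zq_neg_pos Hq Ha.
have [A' _ C'] : [/\ 0 < zc0 (zact v s) * zc1 (zact v s), 0 < zc1 (zact v s) * zc2 (zact v s)
    & 0 < zc2 (zact v s) * zc0 (zact v s)] by apply: zq_neg_same_sign; rewrite zq_gen.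
move: A' C'; case: v Ha Hb Hc {Hq} => a b c /= Ha Hb Hc.
by case: Hs => [->|[->|[->|[->|[->|->]]]]] /=; nia.
Qed.

Lemma inG_pos g v : inG g -> zq v < 0 -> 0 < zc0 v -> 0 < zc0 (zact v g).
Proof.
move=> Hg; elim: Hg v => [|s g0 Hs _ IH] v Hq Hp; first by rewrite zact1.
by rewrite zactM; apply: IH; [rewrite zq_gen|apply: zgen_pos].
Qed.

Definition zw : zvec := ZV 1 1 1.

Lemma inG_zw_pos g : inG g -> 0 < zc0 (zact zw g).
Proof. by move=> Hg; apply: inG_pos. Qed.

Definition zmeasure (v : zvec) : int := zc0 v + zc1 v.

Lemma zreduce_step v : zq v = -6 -> 0 < zc0 v ->
  v = zw \/ exists2 s, zgen s &
    zact v s = zw \/ (0 < zc0 (zact v s) /\ zmeasure (zact v s) < zmeasure v).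
Proof.
move=> Hq Ha; have Hneg : zq v < 0 by rewrite Hq.
have [Hb Hc] := zq_neg_pos Hneg Ha.
have descend s : zgen s -> zmeasure (zact v s) < zmeasure v ->
    exists2 s, zgen s & zact v s = zw \/ (0 < zc0 (zact v s) /\ zmeasure (zact v s) < zmeasure v).
  by move=> Hs Hm; exists s => //; right; split => //; apply: zgen_pos.
move: Hq Ha Hb Hc descend {Hneg}; rewrite /zmeasure /zq /zgen.
case: v => a b c /= Hq Ha Hb Hc descend.
case: (ltrP c b) => [cb|bc]; first by right; apply: (descend gXi) => /=; [auto 6|lia].
case: (ltrP c a) => [ca|ac]; first by right; apply: (descend gY) => /=; [auto 6|lia].
case: (ltrP (2 * a + b) c) => [Xc|cX]; first by right; apply: (descend gX) => /=; [auto 6|lia].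
case: (ltrP (a + 2 * b) c) => [Yc|cY]; first by right; apply: (descend gYi) => /=; [auto 6|lia].
(* no generator descends: then |a + b - c| <= min a b, so 4ab = (a+b-c)^2 + 3 <= ab + 3 *)
have Hsq : 4 * (a * b) = (a + b - c) ^+ 2 + 3 by clear -Hq; lia.
have Hmin : (a + b - c) ^+ 2 <= a * b by clear -Ha Hb bc ac cX cY; nia.
have [a1 b1] : a = 1 /\ b = 1 by clear -Hsq Hmin Ha Hb; split; nia.
subst a b; have [->|->] : c = 1 \/ c = 3 by clear -Hsq; nia.
  by left.
by right; exists gX; [auto|left].
Qed.

Lemma zw_descent v : zq v = -6 -> 0 < zc0 v -> exists2 g, inG g & zact v g = zw.
Proof.
move=> Hq Ha; have [n Hm] : exists n : nat, zmeasure v <= n%:Z.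
  by exists `|zmeasure v|%N; lia.
elim: n v Hq Ha Hm => [|n IH] v Hq Ha Hm.
  have [Hb _] : 0 < zc1 v /\ 0 < zc2 v by apply: zq_neg_pos; rewrite ?Hq.
  by move: Hm; rewrite /zmeasure; lia.
have [->|[s Hs [Ew|[Hp Hlt]]]] := zreduce_step Hq Ha.
- by exists z1; [apply: inG1|rewrite zact1].
- by exists s; [apply: inG_gen|].
- have [g Hg Eg] := IH (zact v s) (etrans (zq_gen v Hs) Hq) Hp ltac:(lia).
  by exists (zmul s g); [apply: inGM|rewrite zactM].
Qed.

Definition s01 : zmx := ZM 0 1 0 1 0 0 0 0 1.
Definition s12 : zmx := ZM 1 0 0 0 0 1 0 1 0.
Definition s20 : zmx := ZM 0 0 1 0 1 0 1 0 0.
Definition c012 : zmx := ZM 0 1 0 0 0 1 1 0 0.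
Definition c021 : zmx := ZM 0 0 1 1 0 0 0 1 0.

Definition zperm (p : zmx) : Prop :=
  p = z1 \/ p = s01 \/ p = s12 \/ p = s20 \/ p = c012 \/ p = c021.

Lemma zunit_row x y z : x + y + z = 1 -> zq (ZV x y z) = 2 ->
  [\/ [/\ x = 1, y = 0 & z = 0], [/\ x = 0, y = 1 & z = 0] | [/\ x = 0, y = 0 & z = 1]].
Proof.
rewrite /zq /= => Hs Hq.
have Ez : z = 1 - x - y by lia.
subst z; have Hsq : x ^+ 2 + y ^+ 2 + (1 - x - y) ^+ 2 = 1 by clear -Hq; nia.
have [Hx Hy] : x ^+ 2 <= 1 /\ y ^+ 2 <= 1.
  by have := sqr_ge0 (1 - x - y); have := sqr_ge0 x; have := sqr_ge0 y; lia.
have [Ex Ey] : (x = -1 \/ x = 0 \/ x = 1) /\ (y = -1 \/ y = 0 \/ y = 1).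
  by split; [clear -Hx|clear -Hy]; nia.
case: Ex Ey Hsq => [->|[->|->]] [->|[->|->]] Hsq;
  first [lia | (constructor 1 + constructor 2 + constructor 3); split; reflexivity].
Qed.

(* An integral isometry fixing w permutes the basis: its columns sum to 1 since
   w m = w, its rows then sum to 1 and have norm 2. *)
Lemma zisom_fix_zw m : zisom m -> zact zw m = zw -> zperm m.
Proof.
case: m => a b c d e f g h i; rewrite /zisom /zact /zmul /ztr /= !mul1r.
case=> E00 E01 E02 E10 E11 E12 E20 E21 E22 [W0 W1 W2].
have Eg : g = 1 - a - d by lia.
have Eh : h = 1 - b - e by lia.
have Ei : i = 1 - c - f by lia.
subst g h i; clear W0 W1 W2.
have R0 : a + b + c = 1 by clear -E00 E01 E02; lia.
have R1 : d + e + f = 1 by clear -E10 E11 E12; lia.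
have q0 : zq (ZV a b c) = 2 by rewrite /zq /=; clear -E00; lia.
have q1 : zq (ZV d e f) = 2 by rewrite /zq /=; clear -E11; lia.
move: E01; rewrite /zperm.
have [[-> -> ->]|[-> -> ->]|[-> -> ->]] := zunit_row R0 q0;
have [[-> -> ->]|[-> -> ->]|[-> -> ->]] := zunit_row R1 q1;
  move=> E01; vm_compute in E01; vm_compute; first [discriminate E01 | auto 7].
Qed.

(* Every integral isometry becomes a permutation matrix, up to the sign -1,
   after right multiplication by an element of G_Z: descend from w m or -w m. *)
Lemma zisom_reduce m : zisom m ->
  exists2 g, inG g & zperm (zmul m g) \/ zperm (zmul zneg1 (zmul m g)).
Proof.
move=> Hm; set v := zact zw m.
have Hq : zq v = -6 by rewrite /v zq_isom.
have Hv0 : zc0 v != 0.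
  have [A _ _] := @zq_neg_same_sign v ltac:(by rewrite Hq).
  by apply/eqP=> E; move: A; rewrite E mul0r.
case: (ltrP 0 (zc0 v)) => [Hpos|Hneg].
  have [g Hg Eg] := zw_descent Hq Hpos.
  exists g => //; left; apply: zisom_fix_zw; last by rewrite zactM.
  by apply: zisomM => //; apply: inG_isom.
have Hpos : 0 < zc0 (zact v zneg1).
  have -> : zc0 (zact v zneg1) = - zc0 v by case: (v) => * /=; ring.
  by rewrite oppr_gt0 lt_neqAle Hv0.
have [g Hg Eg] := zw_descent (etrans (zq_isom v zneg1_isom) Hq) Hpos.
exists g => //; right; apply: zisom_fix_zw.
  by apply: zisomM; [exact: zneg1_isom|apply: zisomM => //; apply: inG_isom].
by rewrite zmulA zneg1_central -zmulA !zactM.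
Qed.

Section IntegralComplement.
Variable sg : zmx.
Hypothesis Hsg : sg = s01 \/ sg = s12 \/ sg = s20.

Definition zH (h : zmx) : Prop :=
  h = z1 \/ h = sg \/ h = zneg1 \/ h = zmul zneg1 sg.

Lemma zH_sg : zH sg. Proof. by rewrite /zH; auto. Qed.

Lemma zH_closed h : zH h -> zH (zmul sg h) /\ zH (zmul zneg1 h).
Proof.
rewrite /zH; case: Hsg => [->|[->|->]] [->|[->|[->|->]]];
  by split; vm_compute; auto 6.
Qed.

Lemma zH_invol h : zH h -> zmul h h = z1.
Proof. by rewrite /zH; case: Hsg => [->|[->|->]] [->|[->|[->|->]]]. Qed.

Lemma zH_isom h : zH h -> zisom h.
Proof. by rewrite /zH; case: Hsg => [->|[->|->]] [->|[->|[->|->]]]. Qed.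

(* sg and -1 have determinant -1, and -sg sends w to -w *)
Lemma zH_meet h : zH h -> inG h -> h = z1.
Proof.
move=> Hh Hg; have := inG_det Hg; have := inG_zw_pos Hg.
by move: Hh; rewrite /zH; case: Hsg => [->|[->|->]] [->|[->|[->|->]]].
Qed.

Lemma zsg_conj_gen s : zgen s -> zgen (zmul sg (zmul s sg)).
Proof.
rewrite /zgen; case: Hsg => [->|[->|->]] [->|[->|[->|[->|[->|->]]]]];
  vm_compute; auto 6.
Qed.

Lemma zH_normalizes h g : zH h -> inG g -> inG (zmul h (zmul g h)).
Proof.
have conj_sg g0 : inG g0 -> inG (zmul sg (zmul g0 sg)).
  elim=> [|s g1 Hs _ IH]; first by rewrite zmul1m zH_invol //; [apply: inG1|apply: zH_sg].
  rewrite zconj_mul; last exact: (zH_invol zH_sg).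
  by apply: inG_mul => //; apply: inG_gen; apply: zsg_conj_gen.
move=> Hh Hg; case: Hh => [->|[->|[->|->]]].
- by rewrite zmul1m zmulm1.
- exact: conj_sg.
- by rewrite zneg1_central -zmulA zneg1_invol zmulm1.
- by rewrite zneg1_conj; apply: conj_sg.
Qed.

(* the 3-cycles lie in G_Z, so each permutation is sg^e times an element of G_Z *)
Lemma zperm_split p : zperm p -> exists2 h, zH h & inG (zmul h p).
Proof.
have even q : q = z1 \/ q = c012 \/ q = c021 -> inG q.
  case=> [->|[->|->]]; first exact: inG1.
    by rewrite (_ : c012 = zmul gY gX) //; apply: inG_mul; apply: inG_gen; rewrite /zgen; auto 6.
  by rewrite (_ : c021 = zmul gZi gXi) //; apply: inG_mul; apply: inG_gen; rewrite /zgen; auto 6.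
rewrite /zperm => Hp.
have [Heven|Hodd] : (p = z1 \/ p = c012 \/ p = c021) \/ (p = s01 \/ p = s12 \/ p = s20) by tauto.
  by exists z1; [left|rewrite zmul1m; apply: even].
exists sg; first exact: zH_sg.
by apply: even; case: Hsg Hodd => [->|[->|->]] [->|[->|->]]; vm_compute; auto.
Qed.

Lemma zdecomp m : zisom m -> exists h g, [/\ zH h, inG g & m = zmul h g].
Proof.
move=> /zisom_reduce[g Hg Hp].
have [g' Hg' Egg'] := inG_inv Hg.
have split_off x h : zH h -> inG (zmul h (zmul x g)) ->
    exists2 g0, inG g0 & x = zmul h g0.
  move=> Hh Hx; exists (zmul (zmul h (zmul x g)) g'); first exact: inG_mul.
  by rewrite zmulA (zmulA h h) zH_invol // zmul1m -zmulA Egg' zmulm1.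
case: Hp => /zperm_split[h Hh Ehp].
  by have [g0 Hg0 ->] := split_off m h Hh Ehp; exists h, g0.
rewrite (zmulA zneg1) in Ehp; have [g0 Hg0 Em] := split_off _ h Hh Ehp.
exists (zmul zneg1 h), g0; split=> //; first by case: (zH_closed Hh).
by rewrite -zmulA -Em zmulA zneg1_invol zmul1m.
Qed.

End IntegralComplement.

Lemma i0E : i0 = @Ordinal 3 0 isT. Proof. exact/val_inj/inordK. Qed.
Lemma i1E : i1 = @Ordinal 3 1 isT. Proof. exact/val_inj/inordK. Qed.
Lemma i2E : i2 = @Ordinal 3 2 isT. Proof. exact/val_inj/inordK. Qed.

Lemma ord3P (i : 'I_3) : [\/ i = i0, i = i1 | i = i2].
Proof.
rewrite i0E i1E i2E; case: i => -[|[|[|//]]] Hi;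
  [constructor 1|constructor 2|constructor 3]; exact/val_inj.
Qed.

Lemma sum2 (R : nmodType) (f : 'I_2 -> R) : \sum_(k < 2) f k = f ord0 + f ord_max.
Proof. by rewrite !big_ord_recr big_ord0 /= add0r; congr (f _ + f _); apply/val_inj. Qed.

Lemma sum3 (R : nmodType) (f : 'I_3 -> R) : \sum_(k < 3) f k = f i0 + f i1 + f i2.
Proof.
rewrite !big_ord_recr big_ord0 /= add0r i0E i1E i2E.
by congr (f _ + f _ + f _); apply/val_inj.
Qed.

Ltac mx3_entries :=
  apply/matrixP; let i := fresh "i" in let j := fresh "j" in
  move=> i j; case: (ord3P i) => ->; case: (ord3P j) => ->;
  rewrite !mxE ?sum3 ?mxE ?i0E ?i1E ?i2E /=.

Definition zentry (m : zmx) (i j : 'I_3) : int :=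
  match nat_of_ord i, nat_of_ord j with
  | 0, 0 => z00 m | 0, 1 => z01 m | 0, _ => z02 m
  | 1, 0 => z10 m | 1, 1 => z11 m | 1, _ => z12 m
  | _, 0 => z20 m | _, 1 => z21 m | _, _ => z22 m
  end%N.

Definition zcoord (v : zvec) (j : 'I_3) : int :=
  match nat_of_ord j with 0 => zc0 v | 1 => zc1 v | _ => zc2 v end%N.

Section Embedding.
Variable F : fieldType.
Hypothesis charF0 : [pchar F] =i pred0.

Lemma char0_natf_neq0 n : n.+1%:R != 0 :> F.
Proof. by rewrite ((pcharf0P _).1 charF0). Qed.

Lemma intf_eq0 (n : int) : (n%:~R == 0 :> F) = (n == 0).
Proof.
have cF := (pcharf0P _).1 charF0.
by case: n => k; rewrite ?NegzE ?intrN ?oppr_eq0 -pmulrn cF.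
Qed.

Lemma intf_inj : injective (fun n : int => n%:~R : F).
Proof. by move=> a b /eqP; rewrite -subr_eq0 -intrB intf_eq0 subr_eq0 => /eqP. Qed.

Definition embed (m : zmx) : 'M[F]_3 := \matrix_(i, j) (zentry m i j)%:~R.
Definition zrow (v : zvec) : 'rV[F]_3 := \row_j (zcoord v j)%:~R.

Lemma embedM a b : embed (zmul a b) = embed a *m embed b.
Proof. by mx3_entries; rewrite !intrD !intrM. Qed.

Lemma embed_tr a : embed (ztr a) = (embed a)^T.
Proof. by mx3_entries. Qed.

Lemma embed1 : embed z1 = 1%:M.
Proof. by mx3_entries. Qed.

Lemma embed_inj a b : embed a = embed b -> a = b.
Proof.
move=> /matrixP E; have Ez i j : zentry a i j = zentry b i j.
  by apply: intf_inj; move: (E i j); rewrite !mxE.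
move: (Ez i0 i0) (Ez i0 i1) (Ez i0 i2) (Ez i1 i0) (Ez i1 i1) (Ez i1 i2).
move: (Ez i2 i0) (Ez i2 i1) (Ez i2 i2).
by rewrite i0E i1E i2E; case: a {E Ez}; case: b => /= * *; congr ZM.
Qed.

Lemma invmx_embed a b : zmul a b = z1 -> invmx (embed a) = embed b.
Proof.
move=> Hab; have Eab : embed a *m embed b = 1%:M by rewrite -embedM Hab embed1.
have [Ua _] := mulmx1_unit Eab.
by rewrite -[invmx _]mulmx1 -Eab mulmxA mulVmx // mul1mx.
Qed.

Lemma zrowM v m : zrow v *m embed m = zrow (zact v m).
Proof.
apply/rowP=> j; case: (ord3P j) => ->.
all: by rewrite !mxE sum3 !mxE ?i0E ?i1E ?i2E /= !intrD !intrM.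
Qed.

Lemma tform_gram u v : tform u v = (u *m embed zgram *m v^T) 0 0.
Proof.
rewrite /tform /mxtrace /emb /ex /ey /ez /mx2.
by rewrite !(mxE, sum2, sum3) ?i0E ?i1E ?i2E /zentry /=; ring.
Qed.

Lemma embed_isom m u v : zisom m -> tform (u *m embed m) (v *m embed m) = tform u v.
Proof.
move=> Hm; rewrite !tform_gram trmx_mul !mulmxA -(mulmxA u) -(mulmxA u).
by rewrite -embed_tr -!embedM Hm.
Qed.

Lemma inL_zrow v : inL v <-> exists z, v = zrow z.
Proof.
split=> [HL|[z ->] j]; last by rewrite mxE; exists (zcoord z j).
have [f Ef] := fin_all_exists HL.
exists (ZV (f i0) (f i1) (f i2)); apply/rowP=> j; rewrite Ef mxE.
by case: (ord3P j) => ->; rewrite ?i0E ?i1E ?i2E.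
Qed.

Lemma IsomZ_of_zisom m m' : zisom m -> zmul m m' = z1 -> IsomZ (embed m).
Proof.
move=> Hm Hmm'.
have Eright : embed m *m embed m' = 1%:M by rewrite -embedM Hmm' embed1.
have Eleft : zmul m' m = z1 by apply: embed_inj; rewrite embedM embed1 mulmx1C.
split.
- by have [] := mulmx1_unit Eright.
- by move=> u v; apply: embed_isom.
- by move=> v /inL_zrow[z ->]; apply/inL_zrow; exists (zact z m); rewrite zrowM.
- move=> w /inL_zrow[z ->]; exists (zrow (zact z m')).
    by apply/inL_zrow; exists (zact z m').
  by rewrite zrowM -zactM Eleft zact1.
Qed.

Lemma gram_entry (M : 'M[F]_3) (i j : 'I_3) :
  (delta_mx (0 : 'I_1) i *m M *m (delta_mx (0 : 'I_1) j)^T) 0 0 = M i j.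
Proof. by rewrite trmx_delta -rowE -colE !mxE. Qed.

(* conversely an element of Isom_Z(L) has integral rows (images of the basis)
   and its Gram identity is read off on pairs of basis vectors *)
Lemma IsomZ_zisom A : IsomZ A -> exists2 m, zisom m & A = embed m.
Proof.
case=> _ Hform HL _.
have Hint i j : exists n : int, A i j = n%:~R.
  have Hrow : inL (delta_mx (0 : 'I_1) i *m A).
    by apply: (HL) => k; rewrite mxE eqxx /=; exists (k == i : nat)%:Z; rewrite pmulrn.
  by have [n En] := Hrow j; exists n; rewrite -En -rowE mxE.
have /fin_all_exists[f Ef] : forall i, exists g : 'I_3 -> int, forall j, A i j = (g j)%:~R.
  by move=> i; exact: (fin_all_exists (Hint i)).
pose m := ZM (f i0 i0) (f i0 i1) (f i0 i2) (f i1 i0) (f i1 i1) (f i1 i2)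
             (f i2 i0) (f i2 i1) (f i2 i2).
have EA : A = embed m.
  apply/matrixP=> i j; rewrite Ef mxE.
  by case: (ord3P i) => ->; case: (ord3P j) => ->; rewrite /m /zentry ?i0E ?i1E ?i2E.
exists m => //; apply: embed_inj; rewrite !embedM embed_tr -EA.
apply/matrixP=> i j; rewrite -[LHS]gram_entry -[RHS]gram_entry.
set ei := delta_mx (0 : 'I_1) i; set ej := delta_mx (0 : 'I_1) j.
have -> : ei *m (A *m embed zgram *m A^T) *m ej^T = (ei *m A) *m embed zgram *m (ej *m A)^T.
  by rewrite trmx_mul !mulmxA.
by rewrite -tform_gram Hform tform_gram.
Qed.

End Embedding.

Section Generators.
Variable F : fieldType.
Hypothesis charF0 : [pchar F] =i pred0.

Ltac mx2_entries :=
  apply/matrixP; let i := fresh "i" in let j := fresh "j" in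
  move=> i j; case: i => -[|[|//]] ?; case: j => -[|[|//]] ?; rewrite !mxE ?sum2 ?mxE /=.

Lemma mx2_mul (a b c d a' b' c' d' : F) : mx2 a b c d *m mx2 a' b' c' d' =
  mx2 (a * a' + b * c') (a * b' + b * d') (c * a' + d * c') (c * b' + d * d').
Proof. by mx2_entries. Qed.
Lemma mx2_add (a b c d a' b' c' d' : F) :
  mx2 a b c d + mx2 a' b' c' d' = mx2 (a + a') (b + b') (c + c') (d + d').
Proof. by mx2_entries. Qed.
Lemma mx2_opp (a b c d : F) : - mx2 a b c d = mx2 (- a) (- b) (- c) (- d).
Proof. by mx2_entries. Qed.
Lemma mx2_scale (k a b c d : F) : k *: mx2 a b c d = mx2 (k * a) (k * b) (k * c) (k * d).
Proof. by mx2_entries. Qed.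

Lemma emb_mx2 (v : 'rV[F]_3) : emb v =
  mx2 (v 0 i0 - v 0 i1 - v 0 i2) (2 * v 0 i1) (- (2 * v 0 i2)) (- v 0 i0 + v 0 i1 + v 0 i2).
Proof. rewrite /emb /ex /ey /ez !mx2_scale !mx2_add; congr mx2; ring. Qed.

Lemma ad_mx2 (a b c d a' b' c' d' : F) : ad (mx2 a b c d) (mx2 a' b' c' d') =
  mx2 (b * c' - b' * c) (a * b' + b * d' - (a' * b + b' * d))
      (c * a' + d * c' - (c' * a + d' * c)) (c * b' - c' * b).
Proof. rewrite /ad !mx2_mul mx2_opp mx2_add; congr mx2; ring. Qed.

Lemma exp_adE (a u : 'M[F]_2) : exp_ad a u =
  u + ad a u + 2%:R^-1 *: ad a (ad a u) + 6%:R^-1 *: ad a (ad a (ad a u)).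
Proof. by rewrite /exp_ad !big_ord_recr big_ord0 /= add0r invr1 !scale1r. Qed.

Lemma coord_mx2 (a b c d : F) (j : 'I_3) : Defs.coord (mx2 a b c d) 0 j =
  if j == i0 then a + b / 2 - c / 2 else if j == i1 then b / 2 else - (c / 2).
Proof. by rewrite /Defs.coord /mx2 !mxE. Qed.

Lemma exp_ad_mx_of a g :
  (forall v, Defs.coord (exp_ad a (emb v)) = v *m embed F g) -> exp_ad_mx a = embed F g.
Proof. by move=> Hg; apply/matrixP=> i j; rewrite /exp_ad_mx /lin1_mx mxE Hg -rowE mxE. Qed.

Ltac exp_ad_coords :=
  move=> v; rewrite exp_adE emb_mx2 !ad_mx2 !mx2_scale !mx2_add;
  let j := fresh "j" in apply/rowP => j; rewrite coord_mx2 !mxE sum3 !mxE;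
  case: (ord3P j) => ->; rewrite ?i0E ?i1E ?i2E /zentry /=;
  field; rewrite !(char0_natf_neq0 charF0).

Lemma exp_ad_xs : exp_ad_mx (xs F) = embed F gX.
Proof. by apply: exp_ad_mx_of; rewrite /xs; exp_ad_coords. Qed.
Lemma exp_ad_ys : exp_ad_mx (ys F) = embed F gY.
Proof. by apply: exp_ad_mx_of; rewrite /ys; exp_ad_coords. Qed.
Lemma exp_ad_zs : exp_ad_mx (zs F) = embed F gZ.
Proof. by apply: exp_ad_mx_of; rewrite /zs; exp_ad_coords. Qed.

End Generators.

Section Groups.
Variable F : fieldType.
Hypothesis charF0 : [pchar F] =i pred0.

Lemma swap_embed :
  [/\ swap F i0 i1 = embed F s01, swap F i1 i2 = embed F s12 & swap F i2 i0 = embed F s20].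
Proof. by split; rewrite /swap /tperm_mx /perm_mx; mx3_entries; rewrite permE. Qed.

Lemma minus1_embed : minus1 F = embed F zneg1.
Proof. by rewrite /minus1; mx3_entries; rewrite ?oppr0. Qed.

Lemma gen_inv_embed :
  [/\ invmx (embed F gX) = embed F gXi, invmx (embed F gY) = embed F gYi
    & invmx (embed F gZ) = embed F gZi].
Proof. by split; apply: invmx_embed. Qed.

Lemma Ggrp_embed A : Ggrp A <-> exists2 g, inG g & A = embed F g.
Proof.
have EX := exp_ad_xs charF0; have EY := exp_ad_ys charF0; have EZ := exp_ad_zs charF0.
have [EXi EYi EZi] := gen_inv_embed.
split.
- elim=> [|s g Hs _ [g' Hg' ->]|s g Hs _ [g' Hg' ->]].
  + by exists z1; [exact: inG1|rewrite embed1].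
  + case: Hs => [->|[->|->]]; rewrite ?EX ?EY ?EZ -embedM;
      [exists (zmul gX g')|exists (zmul gY g')|exists (zmul gZ g')] => //;
      by apply: inGM => //; rewrite /zgen; auto 6.
  + case: Hs => [->|[->|->]]; rewrite ?EX ?EY ?EZ ?EXi ?EYi ?EZi -embedM;
      [exists (zmul gXi g')|exists (zmul gYi g')|exists (zmul gZi g')] => //;
      by apply: inGM => //; rewrite /zgen; auto 6.
- case=> g Hg ->{A}; elim: Hg => [|z g0 Hz _ IH]; first by rewrite embed1; apply: gen1.
  rewrite embedM; case: Hz => [->|[->|[->|[->|[->|->]]]]].
  + by rewrite -EX; apply: genM => //; left.
  + by rewrite -EY; apply: genM => //; right; left.
  + by rewrite -EZ; apply: genM => //; right; right.
  + by rewrite -EXi -EX; apply: genV => //; left.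
  + by rewrite -EYi -EY; apply: genV => //; right; left.
  + by rewrite -EZi -EZ; apply: genV => //; right; right.
Qed.

Section Complement.
Variables (i j : 'I_3) (sg : zmx).
Hypothesis Hsg : sg = s01 \/ sg = s12 \/ sg = s20.
Hypothesis Esg : swap F i j = embed F sg.

Lemma Hgrp_embed A : Hgrp i j A <-> exists2 h, zH sg h & A = embed F h.
Proof.
have sg_invol := zH_invol Hsg (zH_sg sg).
have step h a : zH sg h -> a = swap F i j \/ a = minus1 F ->
    exists2 h', zH sg h' & a *m embed F h = embed F h'.
  move=> Hh [->|->]; rewrite ?Esg ?minus1_embed -embedM.
  - by exists (zmul sg h) => //; case: (zH_closed Hsg Hh).
  - by exists (zmul zneg1 h) => //; case: (zH_closed Hsg Hh).
have inv_gen a : a = swap F i j \/ a = minus1 F -> invmx a = a.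
  by case=> ->; rewrite ?Esg ?minus1_embed; apply: invmx_embed; rewrite ?sg_invol ?zneg1_invol.
split.
- elim=> [|a g Ha _ [h Hh ->]|a g Ha _ [h Hh ->]]; first by exists z1; [left|rewrite embed1].
  + exact: step.
  + by rewrite inv_gen //; apply: step.
- case=> h Hh ->{A}; case: Hh => [->|[->|[->|->]]].
  + by rewrite embed1; apply: gen1.
  + by rewrite -Esg -[swap _ _ _]mulmx1; apply: genM; [left|apply: gen1].
  + by rewrite -minus1_embed -[minus1 _]mulmx1; apply: genM; [right|apply: gen1].
  + rewrite embedM -Esg -minus1_embed -[swap _ _ _]mulmx1.
    by apply: genM; [right|apply: genM; [left|apply: gen1]].
Qed.

Lemma IsomZ_factor (A : 'M[F]_3) :
  IsomZ A <-> exists h n, [/\ Hgrp i j h, Ggrp n & A = h *m n].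
Proof.
split.
- move=> /(IsomZ_zisom charF0)[m /(zdecomp Hsg)[h [g [Hh Hg ->]]] ->].
  exists (embed F h), (embed F g); rewrite embedM; split=> //.
  + by apply/Hgrp_embed; exists h.
  + by apply/Ggrp_embed; exists g.
- case=> _ [_ [/Hgrp_embed[h Hh ->] /Ggrp_embed[g Hg ->] ->]].
  have [g' Hg' Egg'] := inG_inv Hg.
  rewrite -embedM; apply: (IsomZ_of_zisom charF0 (m' := zmul g' h)).
    by apply: zisomM; [exact: (zH_isom Hsg Hh)|apply: inG_isom].
  by rewrite -zmulA (zmulA g) Egg' zmul1m (zH_invol Hsg Hh).
Qed.

Lemma semidirect_pair : semidirect_eq (@IsomZ F) (@Hgrp F i j) (@Ggrp F).
Proof.
split.
- exact: IsomZ_factor.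
- by move=> a Ha; apply/IsomZ_factor; exists a, 1%:M; rewrite mulmx1; split=> //; apply: gen1.
- by move=> a Ha; apply/IsomZ_factor; exists 1%:M, a; rewrite mul1mx; split=> //; apply: gen1.
- move=> k n /IsomZ_factor[_ [_ [/Hgrp_embed[h Hh ->] /Ggrp_embed[g1 Hg1 ->] ->]]].
  move=> /Ggrp_embed[g Hg ->]; have [g1' Hg1' E1] := inG_inv Hg1.
  rewrite -embedM (invmx_embed _ (b := zmul g1' h)); last first.
    by rewrite -zmulA (zmulA g1) E1 zmul1m (zH_invol Hsg Hh).
  apply/Ggrp_embed; exists (zmul g1' (zmul (zmul h (zmul g h)) g1)); last first.
    by rewrite !embedM !mulmxA.
  by apply: inG_mul => //; apply: inG_mul => //; exact: (zH_normalizes Hsg Hh Hg).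
- move=> a /Hgrp_embed[h Hh ->] /Ggrp_embed[g Hg /(embed_inj charF0) Ehg].
  by rewrite (zH_meet Hsg Hh) ?embed1 // Ehg.
Qed.

Lemma klein_pair : klein_four (@Hgrp F i j).
Proof.
have sg_invol := zH_invol Hsg (zH_sg sg).
exists (embed F sg), (embed F zneg1); split.
- move=> c; rewrite Hgrp_embed; split.
  + case=> h [->|[->|[->|->]]] ->; rewrite ?zneg1_central ?embed1 ?embedM;
      by [constructor 1|constructor 2|constructor 3|constructor 4].
  + case=> ->; [exists z1|exists sg|exists zneg1|exists (zmul zneg1 sg)];
      rewrite ?embed1 -?embedM -?zneg1_central; by rewrite /zH; auto.
- by rewrite -embedM sg_invol embed1.
- by rewrite -embedM zneg1_invol embed1.
- by rewrite -!embedM zneg1_central.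
- have ne a b : a <> b -> (embed F a == embed F b) = false.
    by move=> Hab; apply/eqP=> /(embed_inj charF0).
  rewrite -embed1 -embedM /= !inE !ne //;
    by case: Hsg => [->|[->|->]]; vm_compute; discriminate.
Qed.

End Complement.
End Groups.

Theorem theorem5p4 (F : fieldType) (charF0 : [pchar F] =i pred0) :
  [/\ semidirect_eq (@IsomZ F) (@Hgrp F i0 i1) (@Ggrp F),
      semidirect_eq (@IsomZ F) (@Hgrp F i1 i2) (@Ggrp F),
      semidirect_eq (@IsomZ F) (@Hgrp F i2 i0) (@Ggrp F) &
      [/\ klein_four (@Hgrp F i0 i1), klein_four (@Hgrp F i1 i2)
        & klein_four (@Hgrp F i2 i0)]].
Proof.
have [E01 E12 E20] := swap_embed F.
have H01 : s01 = s01 \/ s01 = s12 \/ s01 = s20 by left.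
have H12 : s12 = s01 \/ s12 = s12 \/ s12 = s20 by right; left.
have H20 : s20 = s01 \/ s20 = s12 \/ s20 = s20 by right; right.
split.
- exact: (semidirect_pair charF0 H01 E01).
- exact: (semidirect_pair charF0 H12 E12).
- exact: (semidirect_pair charF0 H20 E20).
- by split; [exact: (klein_pair charF0 H01 E01)|exact: (klein_pair charF0 H12 E12)
            |exact: (klein_pair charF0 H20 E20)].
Qed.
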